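(* On the unit sphere with spherical coordinates $(\varphi,\theta)$ (longitude $\varphi$, polar angle $\theta$, metric $\sin^2\theta\,d\varphi^2+d\theta^2$), let $0<R<\pi/2$ and let $\gamma_\varepsilon(t)=(t+\varepsilon u(t),\,R+\varepsilon v(t))$ be an infinitesimal deformation of the circle of latitude $\gamma_0(t)=(t,R)$, where $u,v$ are smooth $2\pi$-periodic functions. Fix $\alpha\in(0,\pi)$ and define $f_\varepsilon(t)\in(0,\pi)$ by $\sin\alpha\cot f_\varepsilon(t)=\kappa_\varepsilon(t)$, where $\kappa_\varepsilon(t)$ is the geodesic curvature of $\gamma_\varepsilon$ at $\gamma_\varepsilon(t)$, and write $f_\varepsilon(t)=f_0+\varepsilon g(t)+O(\varepsilon^2)$. Then $g$ is $L^2$-orthogonal to the first harmonics: $\int_0^{2\pi}g(t)\cos t\,dt=\int_0^{2\pi}g(t)\sin t\,dt=0$.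
   Context: All quantities are computed to first order in $\varepsilon$. $f_0$ is the constant with $\sin\alpha\cot f_0=\cot R$, the geodesic curvature of the circle $\gamma_0$. *)

From Stdlib Require Import Reals.
From Coquelicot Require Import Coquelicot.
Open Scope R_scope.

(* The curve is embedded in R^3 via
     c(s) = (sin th cos phi, sin th sin phi, cos th),
   and kappa = det(c, c', c'') / |c'|^3, i.e. the geodesic curvature with
   respect to the unit normal c x (c'/|c'|).  For the latitude circle
   (t, r) this gives cot r. *)
Definition geod_curv (phi th : R -> R) (t : R) : R :=
  let x := fun s => sin (th s) * cos (phi s) in
  let y := fun s => sin (th s) * sin (phi s) in
  let z := fun s => cos (th s) in
  let x0 := x t in let y0 := y t in let z0 := z t in
  let x1 := Derive x t in let y1 := Derive y t in let z1 := Derive z t in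
  let x2 := Derive (Derive x) t in let y2 := Derive (Derive y) t in
  let z2 := Derive (Derive z) t in
  (x0 * (y1 * z2 - z1 * y2) - y0 * (x1 * z2 - z1 * x2) + z0 * (x1 * y2 - y1 * x2))
  / (sqrt (x1 ^ 2 + y1 ^ 2 + z1 ^ 2)) ^ 3.

(* At first order the geodesic curvature of the deformed circle changes by the
   Jacobi operator of the latitude circle, [-(v'' + v) / sin^2 R].  Differentiating [sin alpha cot f_eps = kappa_eps]
   at [eps = 0] therefore gives [g = C (v'' + v)] for a positive constant [C].
   Since [w = cos] and [w = sin] solve [w'' + w = 0], the product [(v'' + v) w] is
   the derivative of the 2 pi-periodic function [v' w - v w'], so its integral over
   a period vanishes. *)

From Stdlib Require Import Reals Lra Nsatz FunctionalExtensionality.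
From Coquelicot Require Import Coquelicot.
Open Scope R_scope.

Ltac rewrite_Derive := repeat match goal with
 | H : forall s : _, is_derive ?g s _ |- context [Derive ?f ?x] =>
    rewrite (is_derive_unique f x _ (H x))
 | H : is_derive ?g _ _ |- context [Derive ?f ?x] =>
    rewrite (is_derive_unique f x _ H) end.

Ltac solve_Derive :=
  apply is_derive_unique; auto_derive;
  [repeat split; eexists; eauto | rewrite_Derive; ring].

Lemma sin_cos_sq (x : R) : sin x ^ 2 + cos x ^ 2 = 1.
Proof. rewrite <- (sin2_cos2 x); unfold Rsqr; ring. Qed.

(* The embedding [(sin th cos phi, sin th sin phi, cos th)] and its first two
   derivatives, written with [sp, cp, st, ct] for the sines and cosines of
   [phi, th], [(a, p)] for [(phi', phi'')] and [(b, q)] for [(th', th'')]. *)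
Lemma sphere_frame_det (sp cp st ct a b p q : R) :
  sp ^ 2 + cp ^ 2 = 1 -> st ^ 2 + ct ^ 2 = 1 ->
  let x0 := st * cp in let y0 := st * sp in let z0 := ct in
  let x1 := ct * b * cp - st * sp * a in
  let y1 := ct * b * sp + st * cp * a in
  let z1 := - st * b in
  let x2 := (- st * b * b + ct * q) * cp - ct * b * sp * a
            - (ct * b * sp * a + st * cp * a * a + st * sp * p) in
  let y2 := (- st * b * b + ct * q) * sp + ct * b * cp * a
            + (ct * b * cp * a - st * sp * a * a + st * cp * p) in
  let z2 := - ct * b * b - st * q in
  x0 * (y1 * z2 - z1 * y2) - y0 * (x1 * z2 - z1 * x2) + z0 * (x1 * y2 - y1 * x2)
    = b * (2 * ct * b * a + st * p) - st * a * (q - st * ct * a * a) /\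
  x1 ^ 2 + y1 ^ 2 + z1 ^ 2 = b * b + st * st * (a * a).
Proof. intros Hphi Hth; cbv zeta; simpl in *; split; nsatz. Qed.

Lemma geod_curv_spherical (phi th dphi dth : R -> R) (ddphi ddth t : R) :
  (forall s, is_derive phi s (dphi s)) -> (forall s, is_derive th s (dth s)) ->
  is_derive dphi t ddphi -> is_derive dth t ddth ->
  geod_curv phi th t =
    (dth t * (2 * cos (th t) * dth t * dphi t + sin (th t) * ddphi)
     - sin (th t) * dphi t * (ddth - sin (th t) * cos (th t) * (dphi t * dphi t)))
    / (sqrt (dth t * dth t + sin (th t) * sin (th t) * (dphi t * dphi t))) ^ 3.
Proof.
intros Dphi Dth Ddphi Ddth.
assert (Dx : Derive (fun s => sin (th s) * cos (phi s)) =
  fun s => cos (th s) * dth s * cos (phi s) - sin (th s) * sin (phi s) * dphi s).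
{ apply functional_extensionality; intro s; solve_Derive. }
assert (Dy : Derive (fun s => sin (th s) * sin (phi s)) =
  fun s => cos (th s) * dth s * sin (phi s) + sin (th s) * cos (phi s) * dphi s).
{ apply functional_extensionality; intro s; solve_Derive. }
assert (Dz : Derive (fun s => cos (th s)) = fun s => - sin (th s) * dth s).
{ apply functional_extensionality; intro s; solve_Derive. }
unfold geod_curv; cbv zeta; rewrite Dx, Dy, Dz.
destruct (sphere_frame_det (sin (phi t)) (cos (phi t)) (sin (th t)) (cos (th t))
            (dphi t) (dth t) ddphi ddth) as [Hnum Hden];
  [apply sin_cos_sq | apply sin_cos_sq |].
cbv zeta in Hnum, Hden.
assert (Ddx : Derive (fun s => cos (th s) * dth s * cos (phi s)
                                - sin (th s) * sin (phi s) * dphi s) t =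
  (- sin (th t) * dth t * dth t + cos (th t) * ddth) * cos (phi t)
  - cos (th t) * dth t * sin (phi t) * dphi t
  - (cos (th t) * dth t * sin (phi t) * dphi t
     + sin (th t) * cos (phi t) * dphi t * dphi t
     + sin (th t) * sin (phi t) * ddphi)) by solve_Derive.
assert (Ddy : Derive (fun s => cos (th s) * dth s * sin (phi s)
                                + sin (th s) * cos (phi s) * dphi s) t =
  (- sin (th t) * dth t * dth t + cos (th t) * ddth) * sin (phi t)
  + cos (th t) * dth t * cos (phi t) * dphi t
  + (cos (th t) * dth t * cos (phi t) * dphi t
     - sin (th t) * sin (phi t) * dphi t * dphi t
     + sin (th t) * cos (phi t) * ddphi)) by solve_Derive.
assert (Ddz : Derive (fun s => - sin (th s) * dth s) t =
  - cos (th t) * dth t * dth t - sin (th t) * ddth) by solve_Derive.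
rewrite Ddx, Ddy, Ddz, Hden, Hnum; f_equal; ring.
Qed.

Section SmoothFunction.
Variable v : R -> R.
Hypothesis v_smooth : forall (n : nat) (t : R), ex_derive_n v n t.

Lemma is_derive_Derive_n (n : nat) (t : R) :
  is_derive (Derive_n v n) t (Derive_n v (S n) t).
Proof. exact (Derive_correct _ _ (v_smooth (S n) t)). Qed.

Let Dv : forall t, is_derive v t (Derive v t) := is_derive_Derive_n 0.
Let D2v : forall t, is_derive (Derive v) t (Derive (Derive v) t) :=
  is_derive_Derive_n 1.
Let D3v : forall t, is_derive (Derive (Derive v)) t (Derive (Derive (Derive v)) t) :=
  is_derive_Derive_n 2.

Lemma Derive_periodic (T : R) :
  (forall t, v (t + T) = v t) -> forall t, Derive v (t + T) = Derive v t.
Proof.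
intros vT t.
assert (D : is_derive (fun s => v (s + T)) t (Derive v (t + T))).
{ auto_derive; [eexists; eauto|]. rewrite_Derive. ring. }
symmetry; apply is_derive_unique, (is_derive_ext (fun s => v (s + T)) v);
  [intro; apply vT | exact D].
Qed.

Lemma is_RInt_oscillator_mul (w dw : R -> R) (a b : R) :
  (forall t, is_derive w t (dw t)) -> (forall t, is_derive dw t (- w t)) ->
  is_RInt (fun t => (Derive (Derive v) t + v t) * w t) a b
    ((Derive v b * w b - v b * dw b) - (Derive v a * w a - v a * dw a)).
Proof.
intros Dw Ddw.
apply (is_RInt_derive (fun t => Derive v t * w t - v t * dw t)).
- intros t _. auto_derive; [repeat split; eexists; eauto|]. rewrite_Derive. ring.
- intros t _. apply (ex_derive_continuous (K:=R_AbsRing) (V:=R_NormedModule)).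
  auto_derive. repeat split; eexists; eauto.
Qed.

Lemma is_RInt_periodic_oscillator_mul (w dw : R -> R) :
  (forall t, is_derive w t (dw t)) -> (forall t, is_derive dw t (- w t)) ->
  (forall t, v (t + 2 * PI) = v t) ->
  w (2 * PI) = w 0 -> dw (2 * PI) = dw 0 ->
  is_RInt (fun t => (Derive (Derive v) t + v t) * w t) 0 (2 * PI) 0.
Proof.
intros Dw Ddw vT w2PI dw2PI.
replace 0 with ((Derive v (2 * PI) * w (2 * PI) - v (2 * PI) * dw (2 * PI))
                - (Derive v 0 * w 0 - v 0 * dw 0)) at 2.
- now apply is_RInt_oscillator_mul.
- rewrite <- (Rplus_0_l (2 * PI)), vT, Derive_periodic by exact vT.
  rewrite Rplus_0_l, w2PI, dw2PI. ring.
Qed.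

End SmoothFunction.

Definition latitude_perturbation_curv (r v0 v1 v2 u1 u2 e : R) : R :=
  (e * v1 * (2 * cos (r + e * v0) * (e * v1) * (1 + e * u1)
             + sin (r + e * v0) * (e * u2))
   - sin (r + e * v0) * (1 + e * u1)
     * (e * v2 - sin (r + e * v0) * cos (r + e * v0) * ((1 + e * u1) * (1 + e * u1))))
  / (sqrt (e * v1 * (e * v1)
           + sin (r + e * v0) * sin (r + e * v0) * ((1 + e * u1) * (1 + e * u1)))) ^ 3.

Lemma geod_curv_latitude_perturbation (r e t : R) (u v : R -> R) :
  (forall (n : nat) (t : R), ex_derive_n u n t) ->
  (forall (n : nat) (t : R), ex_derive_n v n t) ->
  geod_curv (fun s => s + e * u s) (fun s => r + e * v s) t =
  latitude_perturbation_curv r (v t) (Derive v t) (Derive (Derive v) t)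
    (Derive u t) (Derive (Derive u) t) e.
Proof.
intros u_smooth v_smooth.
pose proof (is_derive_Derive_n u u_smooth 0 : forall s, is_derive u s (Derive u s)) as Du.
pose proof (is_derive_Derive_n u u_smooth 1
  : forall s, is_derive (Derive u) s (Derive (Derive u) s)) as D2u.
pose proof (is_derive_Derive_n v v_smooth 0 : forall s, is_derive v s (Derive v s)) as Dv.
pose proof (is_derive_Derive_n v v_smooth 1
  : forall s, is_derive (Derive v) s (Derive (Derive v) s)) as D2v.
rewrite (geod_curv_spherical _ _ (fun s => 1 + e * Derive u s) (fun s => e * Derive v s)
           (e * Derive (Derive u) t) (e * Derive (Derive v) t)); [reflexivity|..];
  [intro s|intro s| |]; auto_derive; try (eexists; eauto); rewrite_Derive; ring.
Qed.

Section LatitudeCircle.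
Variables r v0 v1 v2 u1 u2 : R.
Hypothesis r_range : 0 < r < PI.

Let sin_r_gt0 : 0 < sin r := sin_gt_0 r (proj1 r_range) (proj2 r_range).

Let speed2_latitude : 0 * v1 * (0 * v1)
  + sin (r + 0 * v0) * sin (r + 0 * v0) * ((1 + 0 * u1) * (1 + 0 * u1)) = sin r * sin r.
Proof. replace (r + 0 * v0) with r by ring. ring. Qed.

Lemma latitude_perturbation_curv_0 :
  latitude_perturbation_curv r v0 v1 v2 u1 u2 0 = cos r / sin r.
Proof.
unfold latitude_perturbation_curv; rewrite speed2_latitude, sqrt_square by lra.
replace (r + 0 * v0) with r by ring. field. lra.
Qed.

(* The Jacobi operator [-(w_ss + (1 + kappa^2) w)] of the latitude circle, with
   arclength [s = t sin r] and [kappa = cot r]; the tangential part [u] drops out. *)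
Lemma is_derive_latitude_perturbation_curv :
  is_derive (latitude_perturbation_curv r v0 v1 v2 u1 u2) 0
    (- (v2 + v0) / sin r ^ 2).
Proof.
unfold latitude_perturbation_curv; auto_derive.
- rewrite speed2_latitude, sqrt_square by lra.
  split; [|split; [apply Rgt_not_eq|exact I]]; repeat apply Rmult_lt_0_compat; lra.
- rewrite speed2_latitude, sqrt_square by lra; replace (r + 0 * v0) with r by ring.
  transitivity (- (v2 + v0) / sin r ^ 2
                - v0 * (sin r ^ 2 + cos r ^ 2 - 1) / sin r ^ 2); [field; lra|].
  rewrite sin_cos_sq; field; lra.
Qed.

End LatitudeCircle.

Lemma is_derive_scaled_cot (c : R) (h : R -> R) (x dh : R) :
  is_derive h x dh -> sin (h x) <> 0 ->
  is_derive (fun e => c * (cos (h e) / sin (h e))) x (- c * dh / sin (h x) ^ 2).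
Proof.
intros Dh sin_hx. auto_derive.
- repeat split; auto; eexists; eauto.
- rewrite_Derive.
  transitivity (- c * dh * (sin (h x) ^ 2 + cos (h x) ^ 2) / sin (h x) ^ 2);
    [field; auto | now rewrite sin_cos_sq, Rmult_1_r].
Qed.

Lemma sin2_scaled_cot (a k x : R) :
  sin x <> 0 -> a * (cos x / sin x) = k -> a ^ 2 = (a ^ 2 + k ^ 2) * sin x ^ 2.
Proof.
intros sin_x acot. subst k.
rewrite <- (Rmult_1_r (a ^ 2)) at 1; rewrite <- (sin_cos_sq x).
field; auto.
Qed.

Lemma linearized_cot_solution (a c s S dg w : R) :
  0 < a -> 0 < s -> 0 < S ->
  a ^ 2 = (a ^ 2 + (c / s) ^ 2) * S ^ 2 ->
  - a * dg / S ^ 2 = - w / s ^ 2 ->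
  dg * (c ^ 2 + a ^ 2 * s ^ 2) = a * w.
Proof.
intros a_pos s_pos S_pos base linear.
assert (base' : a ^ 2 * s ^ 2 = (c ^ 2 + a ^ 2 * s ^ 2) * S ^ 2).
{ transitivity ((a ^ 2 + (c / s) ^ 2) * S ^ 2 * s ^ 2);
    [now rewrite <- base | field; lra]. }
assert (linear' : a * dg * s ^ 2 = w * S ^ 2).
{ transitivity (- (- a * dg / S ^ 2) * S ^ 2 * s ^ 2); [field; lra|].
  rewrite linear; field; lra. }
apply (Rmult_eq_reg_l (a * s ^ 2)).
- transitivity (a * dg * s ^ 2 * (c ^ 2 + a ^ 2 * s ^ 2)); [ring|].
  rewrite linear'.
  transitivity (w * ((c ^ 2 + a ^ 2 * s ^ 2) * S ^ 2)); [ring|].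
  rewrite <- base'; ring.
- apply Rgt_not_eq, Rmult_lt_0_compat; [|apply pow_lt]; lra.
Qed.

Lemma first_variation_angle (r alpha : R) (u v : R -> R) (f : R -> R -> R)
    (g : R -> R) (t : R) :
  0 < r < PI -> 0 < alpha < PI ->
  (forall (n : nat) (t : R), ex_derive_n u n t) ->
  (forall (n : nat) (t : R), ex_derive_n v n t) ->
  (forall e, 0 < f e t < PI /\
     sin alpha * (cos (f e t) / sin (f e t)) =
       geod_curv (fun s => s + e * u s) (fun s => r + e * v s) t) ->
  is_derive (fun e => f e t) 0 (g t) ->
  g t * (cos r ^ 2 + sin alpha ^ 2 * sin r ^ 2)
    = sin alpha * (Derive (Derive v) t + v t).
Proof.
intros r_range alpha_range u_smooth v_smooth Hf Dg.
set (kappa := latitude_perturbation_curv r (v t) (Derive v t) (Derive (Derive v) t)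
                (Derive u t) (Derive (Derive u) t)).
assert (angle_eq : forall e, sin alpha * (cos (f e t) / sin (f e t)) = kappa e).
{ intro e. rewrite (proj2 (Hf e)). now apply geod_curv_latitude_perturbation. }
assert (sin_r : 0 < sin r) by (apply sin_gt_0; lra).
assert (sin_alpha : 0 < sin alpha) by (apply sin_gt_0; lra).
assert (sin_f0 : 0 < sin (f 0 t)) by (apply sin_gt_0; apply Hf).
assert (Dkappa := is_derive_latitude_perturbation_curv r (v t) (Derive v t)
                    (Derive (Derive v) t) (Derive u t) (Derive (Derive u) t) r_range).
assert (Dcot := is_derive_scaled_cot (sin alpha) (fun e => f e t) 0 (g t) Dg
                  ltac:(simpl; lra)).
apply (is_derive_ext _ _ _ _ angle_eq) in Dcot.
assert (linear_eq : - sin alpha * g t / sin (f 0 t) ^ 2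
                    = - (Derive (Derive v) t + v t) / sin r ^ 2).
{ rewrite <- (is_derive_unique _ _ _ Dcot), <- (is_derive_unique _ _ _ Dkappa).
  reflexivity. }
assert (base_eq := sin2_scaled_cot _ _ (f 0 t) ltac:(lra) (angle_eq 0)).
unfold kappa in base_eq; rewrite latitude_perturbation_curv_0 in base_eq by exact r_range.
apply (linearized_cot_solution _ _ _ (sin (f 0 t))); assumption.
Qed.

Theorem mainTheorem7 (r alpha : R) (u v : R -> R) (f : R -> R -> R) (g : R -> R) :
  0 < r < PI / 2 ->
  0 < alpha < PI ->
  (forall (n : nat) (t : R), ex_derive_n u n t) ->
  (forall (n : nat) (t : R), ex_derive_n v n t) ->
  (forall t, u (t + 2 * PI) = u t) ->
  (forall t, v (t + 2 * PI) = v t) ->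
  (forall e t, 0 < f e t < PI /\
     sin alpha * (cos (f e t) / sin (f e t)) =
       geod_curv (fun s => s + e * u s) (fun s => r + e * v s) t) ->
  (forall t, is_derive (fun e => f e t) 0 (g t)) ->
  is_RInt (fun t => g t * cos t) 0 (2 * PI) 0 /\
  is_RInt (fun t => g t * sin t) 0 (2 * PI) 0.
Proof.
intros r_range alpha_range u_smooth v_smooth _ v_periodic Hf Dg.
assert (r_range' : 0 < r < PI) by lra.
set (D := cos r ^ 2 + sin alpha ^ 2 * sin r ^ 2).
assert (D_pos : 0 < D).
{ apply Rplus_le_lt_0_compat; [apply pow2_ge_0|].
  apply Rmult_lt_0_compat; apply pow_lt, sin_gt_0; lra. }
assert (g_eq : forall t, g t = sin alpha / D * (Derive (Derive v) t + v t)).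
{ intro t. apply (Rmult_eq_reg_r D); [|lra].
  unfold D; rewrite (first_variation_angle r alpha u v f g t); auto.
  fold D; field; lra. }
assert (harmonic : forall w dw : R -> R,
  (forall t, is_derive w t (dw t)) -> (forall t, is_derive dw t (- w t)) ->
  w (2 * PI) = w 0 -> dw (2 * PI) = dw 0 ->
  is_RInt (fun t => g t * w t) 0 (2 * PI) 0).
{ intros w dw Dw Ddw w_per dw_per.
  pose proof (is_RInt_periodic_oscillator_mul v v_smooth w dw Dw Ddw v_periodic
                w_per dw_per) as I.
  apply (is_RInt_scal _ _ _ (sin alpha / D)) in I.
  unfold scal in I; simpl in I; unfold mult in I; simpl in I.
  rewrite Rmult_0_r in I.
  refine (is_RInt_ext _ _ _ _ _ _ I).
  intros t _. rewrite g_eq. symmetry; apply Rmult_assoc. }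
split.
- apply (harmonic cos (fun t => - sin t) is_derive_cos).
  + intro t; auto_derive; [exact I | ring].
  + now rewrite cos_2PI, cos_0.
  + now rewrite sin_2PI, sin_0.
- apply (harmonic sin cos is_derive_sin is_derive_cos).
  + now rewrite sin_2PI, sin_0.
  + now rewrite cos_2PI, cos_0.
Qed.
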